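(* Every map in $p\mathsf{Ch}^*_\mathbb{Q}$ having the right lifting property with respect to all maps in $\mathbb{I}$ also has the right lifting property with respect to all maps in $\mathbb{J}$.
   Context: $p\mathsf{Ch}^*_\mathbb{Q}=\mathsf{Fun}([0,\infty),\mathsf{Ch}^*_\mathbb{Q})$, non-negatively graded rational cochain complexes. $S^k=\mathbb{Q}$ in degree $k$; $D^k$ ($k\ge1$) is $\mathbb{Q}$ in degrees $k-1,k$ with identity differential; $D^0=0$. For $0\le s<t<\infty$, $\mathbb{S}^k_{[s,t)}$ is $0$ at $r<s$, $S^k$ at $s\le r<t$, $D^k$ at $r\ge t$; $\mathbb{S}^k_{[s,\infty)}$ is $0$ at $r<s$, $S^k$ at $r\ge s$; $\mathbb{D}^k_s$ is $0$ at $r<s$, $D^k$ at $r\ge s$ (structure maps identities/inclusions). $\mathbb{I}=\{\mathbb{S}^k_{[s,t)}\to\mathbb{D}^k_s: k\in\mathbb{N},\ 0\le s<t\le\infty\}$ and $\mathbb{J}=\{\mathbb{D}^k_t\to\mathbb{D}^k_s: k\in\mathbb{N},\ 0\le s<t<\infty\}\cup\{0\to\mathbb{D}^k_s: k\in\mathbb{N},\ 0\le s<\infty\}$ (evident inclusions). *)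

From HB Require Import structures.
From mathcomp Require Import all_boot all_order all_algebra.
From Stdlib Require Import Reals.
Set Implicit Arguments. Unset Strict Implicit. Unset Printing Implicit Defensive.
Import GRing.Theory.
Local Open Scope ring_scope.

Definition nnR := {r : R | Rle 0 r}.
Definition nnle (r s : nnR) : Prop := Rle (proj1_sig r) (proj1_sig s).

(* Data of a persistence cochain complex of Q-vector spaces, non-negatively
   graded: X r n is the degree-n part at time r, pd is the differential,
   ptr r s is the structure map X r -> X s (only meaningful for r <= s). *)
Record pcc := PCC {
  pobj :> nnR -> nat -> lmodType rat;
  pd : forall r n, {linear pobj r n -> pobj r n.+1};
  ptr : forall r s n, {linear pobj r n -> pobj s n}
}.

Definition pcc_law (X : pcc) : Prop :=
  (forall r n x, pd X r n.+1 (pd X r n x) = 0) /\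
  (forall r n x, ptr X r r n x = x) /\
  (forall r s t n x, nnle r s -> nnle s t ->
      ptr X s t n (ptr X r s n x) = ptr X r t n x) /\
  (forall r s n x, nnle r s ->
      pd X s n (ptr X r s n x) = ptr X r s n.+1 (pd X r n x)).

Record pmor (X Y : pcc) := PMor {
  pcmp :> forall r n, {linear X r n -> Y r n}
}.

Definition pmor_law (X Y : pcc) (f : pmor X Y) : Prop :=
  (forall r n x, f r n.+1 (pd X r n x) = pd Y r n (f r n x)) /\
  (forall r s n x, nnle r s -> f s n (ptr X r s n x) = ptr Y r s n (f r n x)).

Definition rlp (A B X Y : pcc) (i : pmor A B) (p : pmor X Y) : Prop :=
  forall (u : pmor A X) (v : pmor B Y), pmor_law u -> pmor_law v ->
    (forall r n a, p r n (u r n a) = v r n (i r n a)) ->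
    exists h : pmor B X, pmor_law h /\
      (forall r n a, h r n (i r n a) = u r n a) /\
      (forall r n b, p r n (h r n b) = v r n b).

(* Elementary objects: at each (r, n) a space Q^0 or Q^1 (as row vectors),
   all differentials / structure maps / evident inclusions are the identity
   between 1-dimensional spaces and zero otherwise (pid_mx 1). *)
Definition mkpcc (dm : nnR -> nat -> nat) : pcc :=
  {| pobj r n := 'rV[rat]_(dm r n);
     pd r n := mulmxr (pid_mx 1);
     ptr r s n := mulmxr (pid_mx 1) |}.

Definition mkmor (d1 d2 : nnR -> nat -> nat) : pmor (mkpcc d1) (mkpcc d2) :=
  @PMor (mkpcc d1) (mkpcc d2) (fun r n => mulmxr (pid_mx 1)).

(* S^k: Q in degree k.  D^k (k >= 1): Q in degrees k-1, k; D^0 = 0. *)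
Definition Sdim (k n : nat) : nat := (n == k)%N.
Definition Ddim (k n : nat) : nat :=
  if k is 0 then 0%N else ((n == k) || (n.+1 == k))%N.

(* S^k_[s,t) for t = Some t, S^k_[s,oo) for t = None. *)
Definition Sph_dim (k : nat) (s : R) (t : option R) (r : nnR) (n : nat) : nat :=
  if Rlt_dec (proj1_sig r) s then 0%N else
  match t with
  | Some t => if Rlt_dec (proj1_sig r) t then Sdim k n else Ddim k n
  | None => Sdim k n
  end.
Definition Dsk_dim (k : nat) (s : R) (r : nnR) (n : nat) : nat :=
  if Rlt_dec (proj1_sig r) s then 0%N else Ddim k n.
Definition zero_dim (r : nnR) (n : nat) : nat := 0%N.

Definition Sph k s t := mkpcc (Sph_dim k s t).
Definition Dsk k s := mkpcc (Dsk_dim k s).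
Definition pzero := mkpcc zero_dim.

Definition I_map k s t : pmor (Sph k s t) (Dsk k s) := mkmor _ _.
Definition J_map k s t : pmor (Dsk k t) (Dsk k s) := mkmor _ _.
Definition J0_map k s : pmor pzero (Dsk k s) := mkmor _ _.

(* Every complex mkpcc d used here is at most one-dimensional in each bidegree,
   so a morphism out of it is the same thing as a compatible family of vectors
   indexed by its support, and the lifting problems against the generating maps
   become extension problems for such families.  To extend a family a on
   D^{k+1}_t along D^{k+1}_t -> D^{k+1}_s over b, first view the degree-(k+1)
   part of a as a family on S^{k+2}_[s,t) and lift it against
   S^{k+2}_[s,t) -> D^{k+2}_s: this yields a degree-(k+1) cocycle on [s,oo)
   extending a and lifting b.  Together with the degree-k part of a it is a
   family on S^{k+1}_[s,t), and lifting it against S^{k+1}_[s,t) -> D^{k+1}_s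
   gives the extension.  Reading D^{k+1}_oo as 0, the same argument handles
   0 -> D^{k+1}_s, and every complex involved is 0 when k = 0. *)

From HB Require Import structures.
From mathcomp Require Import all_boot all_order all_algebra zify.
From Stdlib Require Import Reals Lra.
Set Implicit Arguments. Unset Strict Implicit. Unset Printing Implicit Defensive.
Import GRing.Theory.
Local Open Scope ring_scope.

Definition coord m (v : 'rV[rat]_m) : rat := \sum_(i < m) v 0 i.
Definition gen m : 'rV[rat]_m := const_mx 1.

Lemma coord_gen m : coord (gen m) = m%:R.
Proof.
by rewrite /coord (eq_bigr (fun=> 1)) ?sumr_const ?card_ord // => i _; rewrite mxE.
Qed.

Lemma rv_le1E m (v : 'rV[rat]_m) : (m <= 1)%nat -> v = coord v *: gen m.
Proof.
move=> hm; apply/matrixP => i j; rewrite !mxE mulr1 ord1 /coord.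
case: m hm v j => [|[|//]] _ v j; first by case: j.
by rewrite big_ord1 ord1.
Qed.

Lemma mul_pid1 a b (v : 'rV[rat]_a) : (a <= 1)%nat -> (b <= 1)%nat ->
  v *m pid_mx 1 = coord v *: gen b.
Proof.
move=> ha hb; apply/matrixP => i j; rewrite !mxE mulr1 /coord.
apply: eq_bigr => l _; rewrite mxE.
have l0 : nat_of_ord l = 0%nat by have := ltn_ord l; lia.
have j0 : nat_of_ord j = 0%nat by have := ltn_ord j; lia.
by rewrite l0 j0 ord1 mulr1.
Qed.

Section CoordScale.
Variables (m : nat) (V : lmodType rat) (x : V).

Definition coord_scale (v : 'rV[rat]_m) : V := coord v *: x.

Lemma coord_scale_is_linear : linear_for *:%R coord_scale.
Proof.
move=> a u w; rewrite /coord_scale /coord scalerA -scalerDl mulr_sumr -big_split.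
by congr (_ *: _); apply: eq_bigr => i _; rewrite !mxE.
Qed.

HB.instance Definition _ :=
  GRing.isLinear.Build rat 'rV[rat]_m V _ coord_scale coord_scale_is_linear.
End CoordScale.

Definition dims_le1 (d : nnR -> nat -> nat) := forall r n, (d r n <= 1)%nat.
Definition supp (d : nnR -> nat -> nat) r n := (0 < d r n)%nat.

Section ElementaryMorphisms.
Variables (d : nnR -> nat -> nat) (X : pcc).
Hypothesis hd : dims_le1 d.

(* Families vanish off the support, so that they correspond exactly to morphisms. *)
Definition compat_family (e : forall r n, X r n) : Prop :=
  [/\ forall r n, ~~ supp d r n -> e r n = 0,
      forall r n, supp d r n -> pd X r n (e r n) = e r n.+1 &
      forall r r' n, nnle r r' -> supp d r n -> ptr X r r' n (e r n) = e r' n].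

Definition family_of (f : pmor (mkpcc d) X) r n : X r n := f r n (gen (d r n)).

Definition family_pmor (e : forall r n, X r n) : pmor (mkpcc d) X :=
  @PMor (mkpcc d) X (fun r n => @coord_scale (d r n) _ (e r n)).

Lemma coord_supp0 r n (v : 'rV[rat]_(d r n)) : ~~ supp d r n -> coord v = 0.
Proof.
by rewrite /supp => ns; rewrite /coord big1 // => i; have := ltn_ord i; lia.
Qed.

Lemma coord_gen_supp r n : supp d r n -> coord (gen (d r n)) = 1.
Proof. by rewrite coord_gen /supp; have := hd r n; case: (d r n) => [|[|]]. Qed.

Lemma pmor_elemE (f : pmor (mkpcc d) X) r n v : f r n v = coord v *: family_of f r n.
Proof. by rewrite {1}(rv_le1E v (hd r n)) linearZZ. Qed.

Lemma pmor_lawP (f : pmor (mkpcc d) X) : pmor_law f <-> compat_family (family_of f).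
Proof.
split=> [[fpd fptr] | [f0 fpd fptr]].
  split=> [r n ns | r n ns | r r' n rr' ns]; rewrite /family_of.
  - by rewrite [LHS]pmor_elemE coord_supp0 ?scale0r.
  - by rewrite -fpd /= mul_pid1 // linearZZ coord_gen_supp // scale1r.
  - by rewrite -fptr //= mul_pid1 // linearZZ coord_gen_supp // scale1r.
split=> [r n v | r r' n v rr'] /=; rewrite mul_pid1 // linearZZ [f r n v]pmor_elemE linearZZ;
  have [ns|ns] := boolP (supp d r n); try by rewrite coord_supp0 ?scale0r.
- by rewrite fpd.
- by rewrite fptr.
Qed.

Lemma family_pmor_gen e r n :
  compat_family e -> family_pmor e r n (gen (d r n)) = e r n.
Proof.
case=> e0 _ _ /=; rewrite /coord_scale.
have [ns|ns] := boolP (supp d r n); first by rewrite coord_gen_supp ?scale1r.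
by rewrite e0 ?scaler0.
Qed.

Lemma family_pmor_law e : compat_family e -> pmor_law (family_pmor e).
Proof.
move=> ce; apply/pmor_lawP; have [e0 epd eptr] := ce.
by split=> *; rewrite /family_of !family_pmor_gen //; [apply: e0 | apply: epd | apply: eptr].
Qed.

End ElementaryMorphisms.

Definition family_rlp (d1 d2 : nnR -> nat -> nat) (X Y : pcc) (p : pmor X Y) : Prop :=
  forall (a : forall r n, X r n) (b : forall r n, Y r n),
    compat_family d1 a -> compat_family d2 b ->
    (forall r n, supp d1 r n -> p r n (a r n) = b r n) ->
    exists c : forall r n, X r n, [/\ compat_family d2 c,
      forall r n, supp d1 r n -> c r n = a r n &
      forall r n, p r n (c r n) = b r n].

Section LiftingFamilies.
Variables (d1 d2 : nnR -> nat -> nat) (X Y : pcc) (p : pmor X Y).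
Hypotheses (hd1 : dims_le1 d1) (hd2 : dims_le1 d2).

Lemma mkmorE r n v : mkmor d1 d2 r n v = coord v *: gen (d2 r n).
Proof. exact: mul_pid1. Qed.

Lemma mkmor_gen r n : supp d1 r n -> mkmor d1 d2 r n (gen (d1 r n)) = gen (d2 r n).
Proof. by move=> s1; rewrite mkmorE coord_gen_supp ?scale1r. Qed.

Lemma rlp_mkmorP : rlp (mkmor d1 d2) p <-> family_rlp d1 d2 p.
Proof.
split=> [lift a b ca cb pab | lift u v lu lv puv].
  have comm_ab r n w :
      p r n (family_pmor d1 a r n w) = family_pmor d2 b r n (mkmor d1 d2 r n w).
    rewrite mkmorE [RHS]linearZZ family_pmor_gen // [LHS]linearZZ.
    have [s1|ns1] := boolP (supp d1 r n); first by rewrite pab.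
    by rewrite coord_supp0 ?scale0r.
  have [h [lh [hi hp]]] :=
    lift _ _ (family_pmor_law hd1 ca) (family_pmor_law hd2 cb) comm_ab.
  exists (family_of h); split=> [|r n s1|r n]; rewrite /family_of.
  - exact/pmor_lawP.
  - by rewrite -mkmor_gen // hi family_pmor_gen.
  - by rewrite hp family_pmor_gen.
have comm_uv r n : supp d1 r n -> p r n (family_of u r n) = family_of v r n.
  by move=> s1; rewrite /family_of puv mkmor_gen.
have [c [cc ca cp]] :=
  lift _ _ ((pmor_lawP hd1 u).1 lu) ((pmor_lawP hd2 v).1 lv) comm_uv.
exists (family_pmor d2 c); split; [exact: family_pmor_law | split=> r n w].
- rewrite mkmorE linearZZ family_pmor_gen // [RHS]pmor_elemE //.
  have [s1|ns1] := boolP (supp d1 r n); first by rewrite ca.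
  by rewrite coord_supp0 ?scale0r.
- by rewrite /= /coord_scale linearZZ cp -pmor_elemE.
Qed.

End LiftingFamilies.

Lemma family_rlp_eq_supp d1 d2 (X Y : pcc) (p : pmor X Y) :
  (forall r n, supp d1 r n = supp d2 r n) -> family_rlp d1 d2 p.
Proof.
move=> e12 a b [a0 apd aptr] [b0 _ _] pab; exists a; split=> [|//|r n].
- by split=> [r n|r n|r r' n rr']; rewrite -e12; [apply: a0 | apply: apd | apply: aptr].
- have [s1|ns1] := boolP (supp d1 r n); first exact: pab.
  by rewrite a0 // linear0 b0 // -e12.
Qed.

Definition deg_part (X : pcc) m (e : forall r n, X r n) r n : X r n :=
  if n == m then e r n else 0.

Lemma compat_deg_part d d' (X : pcc) (e : forall r n, X r n) m :
  compat_family d e ->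
  (forall r, supp d' r m.+1 = supp d r m.+1) ->
  (forall r, ~~ supp d r m.+2) -> (forall r, ~~ supp d' r m) ->
  compat_family d' (deg_part m.+1 e).
Proof.
move=> [e0 epd eptr] eq_m top bot; rewrite /deg_part.
split=> [r n | r n | r r' n rr']; case: eqP => [-> | nm].
- by rewrite eq_m; apply: e0.
- by [].
- by rewrite eq_m => /epd ->; rewrite e0 ?if_same.
- move=> sn; rewrite linear0; case: eqP => // -[en].
  by move: sn; rewrite en (negbTE (bot r)).
- by rewrite eq_m => /(eptr _ _ _ rr').
- by rewrite linear0.
Qed.

(* D^k_T with D^k_oo = 0, so that J0_map k s is the case T = None of J_map. *)
Definition Dsk_dim_opt k (T : option R) : nnR -> nat -> nat :=
  if T is Some t then Dsk_dim k t else zero_dim.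

Ltac supp_tac :=
  unfold supp, Dsk_dim_opt, Sph_dim, Dsk_dim, zero_dim, Sdim, Ddim, nnle in *;
  repeat match goal with
  | T : option R |- _ => destruct T
  | |- context [Rlt_dec ?a ?b] => destruct (Rlt_dec a b)
  | H : context [Rlt_dec ?a ?b] |- _ => destruct (Rlt_dec a b)
  end; cbn [is_left] in *; try (exfalso; lra); lia.

Lemma family_rlp_Dsk (X Y : pcc) (p : pmor X Y) k s (T : option R) :
  (if T is Some t then Rlt s t else True) ->
  family_rlp (Sph_dim k.+2 s T) (Dsk_dim k.+2 s) p ->
  family_rlp (Sph_dim k.+1 s T) (Dsk_dim k.+1 s) p ->
  family_rlp (Dsk_dim_opt k.+1 T) (Dsk_dim k.+1 s) p.
Proof.
move=> hT lift2 lift1 a b ca cb pab; have [a0 apd aptr] := ca.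
have ca1 : compat_family (Sph_dim k.+2 s T) (deg_part k.+1 a).
  by apply: (compat_deg_part ca) => *; supp_tac.
have cb1 : compat_family (Dsk_dim k.+2 s) (deg_part k.+1 b).
  by apply: (compat_deg_part cb) => *; supp_tac.
(* c1 is a degree-(k+1) cocycle on [s,oo) extending a and lifting b. *)
have [|c1 [[c1_0 c1pd c1ptr] c1a c1p]] := lift2 _ _ ca1 cb1.
  move=> r n; rewrite /deg_part; case: eqP => [-> sn | _ _]; last exact: linear0.
  by apply: pab; supp_tac.
pose a2 r n := if n == k.+1 then c1 r n else a r n.
have ca2 : compat_family (Sph_dim k.+1 s T) a2.
  split=> [r n | r n | r r' n rr']; rewrite /a2; case: eqP => [-> | nk] sn.
  - by apply: c1_0; supp_tac.
  - by apply: a0; supp_tac.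
  - rewrite (gtn_eqF (ltnSn _)) c1pd; last by supp_tac.
    rewrite c1a; last by supp_tac.
    by rewrite /deg_part (gtn_eqF (ltnSn _)) a0 //; supp_tac.
  - have -> : n = k by supp_tac.
    rewrite eqxx apd; last by supp_tac.
    by rewrite c1a /deg_part ?eqxx //; supp_tac.
  - by apply: c1ptr => //; supp_tac.
  - by apply: aptr => //; supp_tac.
have [|c2 [cc2 c2a2 c2p]] := lift1 _ _ ca2 cb.
  move=> r n sn; rewrite /a2; case: eqP => [-> | nk].
  - by rewrite c1p /deg_part eqxx.
  - by apply: pab; supp_tac.
exists c2; split=> // r n sn; rewrite c2a2; last by supp_tac.
rewrite /a2; case: eqP => // ->.
by rewrite c1a /deg_part ?eqxx //; supp_tac.
Qed.

Lemma dims_le1_Sph k s T : dims_le1 (Sph_dim k s T).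
Proof. by move=> r n; case: k => [|k]; supp_tac. Qed.

Lemma dims_le1_Dsk k s : dims_le1 (Dsk_dim k s).
Proof. by move=> r n; case: k => [|k]; supp_tac. Qed.

Lemma dims_le1_Dsk_opt k T : dims_le1 (Dsk_dim_opt k T).
Proof. by case: T => [t|] //; apply: dims_le1_Dsk. Qed.

Local Close Scope ring_scope.

Theorem mainTheorem9 (X Y : pcc) (p : pmor X Y) :
  pcc_law X -> pcc_law Y -> pmor_law p ->
  (* RLP against I: S^k_[s,t) -> D^k_s, 0 <= s < t <= oo *)
  (forall (k : nat) (s t : R), Rle 0 s -> Rlt s t ->
      rlp (I_map k s (Some t)) p) ->
  (forall (k : nat) (s : R), Rle 0 s -> rlp (I_map k s None) p) ->
  (* RLP against J *)
  (forall (k : nat) (s t : R), Rle 0 s -> Rlt s t -> rlp (J_map k s t) p) /\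
  (forall (k : nat) (s : R), Rle 0 s -> rlp (J0_map k s) p).
Proof.
move=> _ _ _ lift_I lift_Iinf.
have lift_I_opt k s (T : option R) : Rle 0 s -> (if T is Some t then Rlt s t else True) ->
    family_rlp (Sph_dim k s T) (Dsk_dim k s) p.
  move=> s0 hT; apply/(rlp_mkmorP _ (dims_le1_Sph k s T) (dims_le1_Dsk k s)).
  by case: T hT => [t st|_]; [apply: lift_I | apply: lift_Iinf].
have lift_J k s (T : option R) : Rle 0 s -> (if T is Some t then Rlt s t else True) ->
    rlp (mkmor (Dsk_dim_opt k T) (Dsk_dim k s)) p.
  move=> s0 hT; apply/(rlp_mkmorP _ (dims_le1_Dsk_opt k T) (dims_le1_Dsk k s)).
  case: k => [|k]; first by apply: family_rlp_eq_supp => r n; supp_tac.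
  by apply: family_rlp_Dsk => //; apply: lift_I_opt.
by split=> [k s t s0 st | k s s0]; [apply: (lift_J k s (Some t)) | apply: (lift_J k s None)].
Qed.
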